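(* Let $P$ be the poset encoded by $011$ (height 3, with $P(0)\cup P(1)$ of type $3C$ and $P(1)\cup P(2)$, $P(2)\cup P(3)$ 6-crowns). If $D$ is a down-set of $P$ and $r:P\setminus D\to R$ is a retraction onto a 4-crown stack or a 2-element antichain, then $D$ contains at least two points of $P(0)$.
   Context: All posets are finite; level sets $P(0)=\min P$, $P(k+1)=\min(P\setminus\bigcup_{i\le k}P(i))$; $A<B$ means $a<b$ for all $a\in A,b\in B$. A retraction is an idempotent order-preserving self-map; its image is a retract. A 4-crown stack is an ordinal sum of at least two 2-element antichains. A 6-crown is $x_0<y_0>x_1<y_1>x_2<y_2>x_0$ with no other comparabilities; type $3C$ means three disjoint 2-element chains with no further comparabilities. Encoding: for a binary string $b_0b_1\cdots b_{n-1}$ ($n\ge1$), the encoded poset is the (unique up to isomorphism) poset $Q$ of height $n$ whose level sets $Q(0),\dots,Q(n)$ are 3-element antichains, with $Q(k)<Q(\ell)$ whenever $\ell\ge k+2$, and with $Q(k)\cup Q(k+1)$ a 6-crown if $b_k=1$ and of type $3C$ if $b_k=0$; all comparabilities follow from these (the structure is that of a consecutive segment of a nice section of width three with horizon 2). *)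

From mathcomp Require Import all_boot.
Set Implicit Arguments. Unset Strict Implicit. Unset Printing Implicit Defensive.

(* Elements of the poset encoded by a binary string b of length n:
   pairs (k, i) with k : 'I_(n+1) the level and i : 'I_3 the position.   *)
Definition enc_elt (n : nat) := ('I_n.+1 * 'I_3)%type.

(* Comparabilities between consecutive levels k, k+1:
   x_i < y_j iff j = i (type 3C, bit 0), or j = i or j = i-1 mod 3
   (6-crown x_0<y_0>x_1<y_1>x_2<y_2>x_0 with the labelling x_i<y_i, x_i<y_(i-1)). *)
Definition enc_adj (c : bool) (i j : 'I_3) : bool :=
  (j == i :> nat) || (c && (j == (i + 2) %% 3 :> nat)).

Definition enc_le (b : seq bool) (x y : enc_elt (size b)) : bool :=
  [|| x == y,
      (x.1 + 2 <= y.1)%N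
    | (y.1 == x.1 + 1 :> nat) && enc_adj (nth false b x.1) x.2 y.2].

(* Minimal elements, i.e. the level set P(0) = min P. *)
Definition min_set (T : finType) (le : rel T) : {set T} :=
  [set x | [forall y, le y x ==> (y == x)]].

Definition down_set (T : finType) (le : rel T) (D : {set T}) : Prop :=
  forall x y, y \in D -> le x y -> x \in D.

Definition retraction_on (T : finType) (le : rel T) (U : {set T}) (r : T -> T) : Prop :=
  [/\ forall x, x \in U -> r x \in U,
      forall x y, x \in U -> y \in U -> le x y -> le (r x) (r y)
    & forall x, x \in U -> r (r x) = r x].

(* R (with the induced order) is an ordinal sum of m >= 2 two-element antichains. *)
Definition four_crown_stack (T : finType) (le : rel T) (R : {set T}) : Prop :=
  exists (m : nat) (f : T -> nat),
    [/\ (2 <= m)%N,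
        forall x, x \in R -> (f x < m)%N,
        forall k, (k < m)%N -> #|[set x in R | f x == k]| = 2
      & forall x y, x \in R -> y \in R -> x != y -> (le x y = (f x < f y)%N)].

Definition two_antichain (T : finType) (le : rel T) (R : {set T}) : Prop :=
  #|R| = 2 /\ forall x y, x \in R -> y \in R -> x != y -> ~~ le x y.

Definition P011 := [:: false; true; true].

From mathcomp Require Import all_boot.
Set Implicit Arguments. Unset Strict Implicit. Unset Printing Implicit Defensive.

(* A down-set D with at most one minimal element lies inside one chain x_i < y_i
   of the type-3C part P(0) u P(1): a point of level >= 2 lies above all of P(0),
   and y_j lies above x_j only.  Both kinds of retract pair each of their points
   with exactly one incomparable point.  For each of the twelve subsets D of such
   a chain and every candidate image R of P \ D with this pairing property, three
   rounds of arc-consistency propagation of the constraints "r is order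
   preserving, maps into R and fixes R pointwise" leave some point of P \ D with
   no possible image; this finite check is carried out by computation. *)

Section Pairing.
Variables (T : finType) (le : rel T).

Definition incomparable (x y : T) : bool := ~~ le x y && ~~ le y x.

Definition paired_by_incomparability (R : {set T}) : Prop :=
  forall x, x \in R -> #|[set y in R | incomparable x y]| = 1.

Hypothesis le_refl : reflexive le.

Lemma four_crown_stack_paired R :
  four_crown_stack le R -> paired_by_incomparability R.
Proof.
case=> m [f [_ f_lt card_level le_f]] x xR.
suff -> : [set y in R | incomparable x y] = [set y in R | f y == f x] :\ x.
  have := cardsD1 x [set y in R | f y == f x].
  by rewrite card_level ?f_lt // inE xR eqxx add1n => -[].
apply/setP => y; rewrite !inE /incomparable.
have [->|yx] := eqVneq y x; first by rewrite le_refl andbF.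
case yR: (y \in R); rewrite //= le_f // ?le_f // 1?eq_sym //.
by case: ltngtP.
Qed.

Lemma two_antichain_paired R :
  two_antichain le R -> paired_by_incomparability R.
Proof.
case=> card2 inc x xR.
suff -> : [set y in R | incomparable x y] = R :\ x.
  by have := cardsD1 x R; rewrite xR card2 add1n => -[].
apply/setP => y; rewrite !inE /incomparable.
have [->|yx] := eqVneq y x; first by rewrite le_refl andbF.
by case yR: (y \in R); rewrite //= !inc // eq_sym.
Qed.

End Pairing.

Section ArcConsistency.
Variables (T : eqType) (le : rel T) (U : seq T).

Definition supported (C : T -> seq T) (x v : T) : bool :=
  all (fun y => (le x y ==> has (le v) (C y)) && (le y x ==> has (le^~ v) (C y))) U.

Definition refine_cands (C : T -> seq T) (x : T) : seq T :=
  [seq v <- C x | supported C x v].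

Definition arc_rounds (memo : (T -> seq T) -> T -> seq T) (k : nat)
    (C : T -> seq T) : T -> seq T :=
  iter k (fun C' => memo (refine_cands C')) C.

Definition arc_refutes (memo : (T -> seq T) -> T -> seq T) (k : nat)
    (C : T -> seq T) : bool :=
  let C' := arc_rounds memo k C in has (fun x => nilp (C' x)) U.

Definition retract_cands (inR : pred T) (R : seq T) (x : T) : seq T :=
  if inR x then [:: x] else R.

Variable r : T -> T.
Hypothesis r_mono : {in U &, forall x y, le x y -> le (r x) (r y)}.

Lemma refine_cands_sound C :
  {in U, forall x, r x \in C x} -> {in U, forall x, r x \in refine_cands C x}.
Proof.
move=> rC x xU; rewrite mem_filter rC // andbT.
apply/allP => y yU; apply/andP; split; apply/implyP => le_xy;
  by apply/hasP; exists (r y); rewrite ?rC ?r_mono.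
Qed.

Lemma arc_rounds_sound memo k C : (forall f, memo f =1 f) ->
  {in U, forall x, r x \in C x} -> {in U, forall x, r x \in arc_rounds memo k C x}.
Proof.
move=> memoE rC; elim: k => [|k IHk] //= x xU.
by rewrite memoE; apply: refine_cands_sound.
Qed.

Lemma arc_refutes_sound memo k C : (forall f, memo f =1 f) ->
  {in U, forall x, r x \in C x} -> ~~ arc_refutes memo k C.
Proof.
move=> memoE rC; apply/hasPn => x xU.
by have := arc_rounds_sound k memoE rC xU; case: (arc_rounds _ _ _ x).
Qed.

Lemma retract_cands_sound (inR : pred T) R :
  {in U, forall x, r x \in R} -> {in U, forall x, inR x -> r x = x} ->
  {in U, forall x, r x \in retract_cands inR R x}.
Proof.
move=> rR r_id x xU; rewrite /retract_cands.
by case: ifP => [/(r_id x xU)->|_]; rewrite ?mem_seq1 ?rR.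
Qed.

End ArcConsistency.

Fixpoint subseqs {A : Type} (s : seq A) : seq (seq A) :=
  if s is x :: s' then let ss := subseqs s' in [seq x :: t | t <- ss] ++ ss
  else [:: [::]].

Lemma mem_subseqs (T : eqType) (s t : seq T) : subseq s t -> s \in subseqs t.
Proof.
elim: t s => [|y t IHt] [|x s] //=; rewrite mem_cat.
  by rewrite IHt ?sub0seq ?orbT.
case: eqVneq => [-> /IHt s_t|_ /IHt ->]; last by rewrite orbT.
by rewrite map_f.
Qed.

Local Notation P := (enc_elt (size P011)).
Local Notation le := (@enc_le P011).

Lemma enc_le_refl : reflexive le.
Proof. by move=> x; rewrite /enc_le eqxx. Qed.

(* [enum 'I_n] is locked and does not reduce under [vm_compute]. *)
Fixpoint ords n : seq 'I_n :=
  if n is m.+1 then ord0 :: map (lift ord0) (ords m) else [::].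

Lemma ords_enum n : ords n = enum 'I_n.
Proof. by elim: n => [|n IHn] /=; rewrite ?enum_ord0 // enum_ordSl IHn. Qed.

Definition elems : seq P := [seq (k, i) | k <- ords 4, i <- ords 3].

Lemma mem_elems x : x \in elems.
Proof. by case: x => k i; apply/allpairsP; exists (k, i); rewrite !ords_enum !mem_enum. Qed.

Lemma elems_uniq : uniq elems.
Proof.
rewrite allpairs_uniq ?ords_enum ?enum_uniq //.
by move=> [? ?] [? ?] _ _ [-> ->].
Qed.

(* Under [vm_compute] the generic equality of pairs of ordinals is very slow, so
   the computation uses [elt_eqb] and [le011], which is [enc_le] with [==]
   replaced by [elt_eqb]. *)
Definition elt_eqb (x y : P) : bool := (x.1 == y.1 :> nat) && (x.2 == y.2 :> nat).

Lemma elt_eqbE x y : elt_eqb x y = (x == y).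
Proof. by case: x y => [k i] [l j]; rewrite /elt_eqb xpair_eqE !val_eqE. Qed.

Definition memb (x : P) (s : seq P) : bool := has (elt_eqb x) s.

Lemma membE x s : memb x s = (x \in s).
Proof. by rewrite -has_pred1; apply: eq_has => y; rewrite /= elt_eqbE eq_sym. Qed.

Definition le011 (x y : P) : bool :=
  [|| elt_eqb x y, (x.1 + 2 <= y.1)%N
    | (y.1 == x.1 + 1 :> nat) && enc_adj (nth false P011 x.1) x.2 y.2].

Lemma le011E : le011 =2 le.
Proof. by move=> x y; rewrite /le011 elt_eqbE. Qed.

(* Memoizes [f] in a table indexed by level and position, so that each round
   of [arc_rounds] is evaluated once instead of at every lookup. *)
Definition tabulate (f : P -> seq P) : P -> seq P :=
  let tbl := [seq [seq f (k, i) | i <- ords 3] | k <- ords 4] in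
  fun x => nth [::] (nth [::] tbl x.1) x.2.

Lemma tabulateE f : tabulate f =1 f.
Proof.
case=> k i; rewrite /tabulate !ords_enum.
by rewrite (nth_map k) ?size_enum_ord // (nth_map i) ?size_enum_ord // !nth_ord_enum.
Qed.

Definition pairedb (s : seq P) : bool :=
  all (fun x => count (incomparable le011 x) s == 1) s.

Lemma pairedb_paired (R : {set P}) s :
  uniq s -> s =i R -> paired_by_incomparability le R -> pairedb s.
Proof.
move=> s_uniq sR pairedR; apply/allP => x xs; apply/eqP.
rewrite -[RHS](pairedR x) -?sR // -size_filter -(card_uniqP (filter_uniq _ s_uniq)).
by apply: eq_card => y; rewrite mem_filter !inE sR andbC /incomparable !le011E.
Qed.

Definition chain (i : 'I_3) : pred P := fun x => (x.1 <= 1)%N && (x.2 == i).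

Lemma level0_min (j : 'I_3) : (ord0, j) \in min_set le.
Proof.
rewrite inE; apply/forallP => y; apply/implyP.
by rewrite /enc_le /= addn2 addn1 !orbF.
Qed.

Lemma down_set_sub_chain D :
  down_set le D -> (#|D :&: min_set le| < 2)%N -> exists i, {subset D <= chain i}.
Proof.
move=> downD /ltnSE/card_le1_eqP min_eq.
have base_in x : x \in D -> (x.1 <= 1)%N -> (ord0, x.2) \in D :&: min_set le.
  move=> xD x_low; rewrite inE level0_min andbT; apply: downD xD _.
  rewrite /enc_le /=; case: x x_low => [[[|[|l]] lt_l] j] //= _.
    by rewrite orbF; apply/eqP; congr pair; apply: val_inj.
  by rewrite /enc_adj eqxx.
have low_level x : x \in D -> (x.1 <= 1)%N.
  move=> xD; rewrite leqNgt; apply/negP => x_high.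
  have level0_in k : (ord0, k) \in D :&: min_set le.
    by rewrite inE level0_min andbT; apply: downD xD _; rewrite /enc_le /= add0n x_high orbT.
  by have /(congr1 snd) := min_eq _ _ (level0_in ord0) (level0_in (lift ord0 ord0)).
case: (set_0Vmem D) => [-> | [x xD]]; first by exists ord0 => y; rewrite inE.
exists x.2 => y yD; apply/andP; split; first exact: low_level.
by have /(congr1 snd) /= -> := min_eq _ _ (base_in y yD (low_level y yD)) (base_in x xD (low_level x xD)).
Qed.

Definition refuted_retracts (U : seq P) : bool :=
  all (fun R => arc_refutes le011 U tabulate 3 (retract_cands (memb^~ R) R))
      [seq R <- subseqs U | pairedb R].

Lemma chain_complements_refuted :
  all (fun i => all (fun Ds => refuted_retracts [seq x <- elems | ~~ memb x Ds])
                    (subseqs [seq x <- elems | chain i x]))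
      (ords 3).
Proof. vm_cast_no_check (erefl true). Qed.

Lemma paired_retract_not_refuted D r :
  retraction_on le (~: D) r -> paired_by_incomparability le (r @: ~: D) ->
  ~~ refuted_retracts [seq x <- elems | x \notin D].
Proof.
move=> [r_U r_mono r_idem] pairedR; set U := [seq x <- _ | _].
have memU : U =i ~: D by move=> x; rewrite mem_filter mem_elems inE andbT.
set Rs := [seq x <- U | x \in r @: ~: D].
have memRs : Rs =i r @: ~: D.
  by move=> x; rewrite mem_filter memU andb_idr // => /imsetP[y yU ->]; apply: r_U.
apply/allPn; exists Rs.
  rewrite mem_filter mem_subseqs ?filter_subseq // andbT.
  by apply: pairedb_paired pairedR; rewrite ?filter_uniq ?elems_uniq.
apply: (@arc_refutes_sound _ _ _ r) tabulateE _ => [x y xU yU|].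
  by rewrite !le011E; apply: r_mono; rewrite -memU.
apply: retract_cands_sound => x xU; first by rewrite memRs imset_f -?memU.
by rewrite membE memRs => /imsetP[y yU ->]; apply: r_idem.
Qed.

Theorem lemma7p2 :
  forall (D : {set enc_elt (size P011)}) (r : enc_elt (size P011) -> enc_elt (size P011)),
    down_set (@enc_le P011) D ->
    retraction_on (@enc_le P011) (~: D) r ->
    (four_crown_stack (@enc_le P011) (r @: (~: D)) \/
     two_antichain (@enc_le P011) (r @: (~: D))) ->
    (2 <= #|D :&: min_set (@enc_le P011)|)%N.
Proof.
move=> D r downD retr stack_or_antichain; rewrite leqNgt; apply/negP => few_min.
have [i D_chain] := down_set_sub_chain downD few_min.
have pairedR : paired_by_incomparability le (r @: ~: D).
  case: stack_or_antichain => [stack | antichain].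
    exact: (four_crown_stack_paired enc_le_refl stack).
  exact: (two_antichain_paired enc_le_refl antichain).
move/negP: (paired_retract_not_refuted retr pairedR); apply.
set Ds := [seq x <- elems | x \in D].
have -> : [seq x <- elems | x \notin D] = [seq x <- elems | ~~ memb x Ds].
  by apply: eq_filter => x; rewrite membE mem_filter mem_elems andbT.
have i_listed : i \in ords 3 by rewrite ords_enum mem_enum.
have Ds_listed : Ds \in subseqs [seq x <- elems | chain i x].
  rewrite mem_subseqs // subseq_filter filter_subseq andbT.
  by apply/allP => x; rewrite mem_filter => /andP[/D_chain].
exact: allP (allP chain_complements_refuted i i_listed) Ds Ds_listed.
Qed.
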